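(* Let $0<m\le L$ and let $(\alpha,\beta,\gamma)$ be constant parameters such that, for every $f\in\mathcal{Q}_m^L$, the spectral radius of the matrix $A$ equals $\rho=1-1/T_s\in(0,1)$. Then $$\hat J_{\max}:=\max_{\lambda\in[m,L]}\hat J(\lambda)\ge\frac{\sigma_w^2}{2(1+\rho)^2}\,T_s,\qquad \hat J_{\min}:=\min_{\lambda\in[m,L]}\hat J(\lambda)\ge\sigma_w^2 .$$
   Context: $\mathcal{Q}_m^L$ is the class of quadratic functions $f(x)=\tfrac12x^TQx-q^Tx$ on $\mathbb{R}^n$ with $Q=Q^T\succ0$ whose largest eigenvalue is $L$ and smallest is $m$. For the two-step momentum algorithm $x^{t+2}=x^{t+1}+\beta(x^{t+1}-x^t)-\alpha\nabla f\big(x^{t+1}+\gamma(x^{t+1}-x^t)\big)+\sigma_w w^t$ ($w^t$ white noise with zero mean and identity covariance, $\sigma_w\ge0$), the state matrix is $A=\begin{bmatrix}0&I\\-\beta I+\gamma\alpha Q&(1+\beta)I-(1+\gamma)\alpha Q\end{bmatrix}$. For $\lambda>0$ define $a(\lambda)=\beta-\gamma\alpha\lambda$, $b(\lambda)=(1+\gamma)\alpha\lambda-(1+\beta)$, $d(\lambda)=a(\lambda)+b(\lambda)+1$, $l(\lambda)=a(\lambda)-b(\lambda)+1$, $h(\lambda)=1-a(\lambda)$, and $\hat J(\lambda)=\dfrac{\sigma_w^2\,(d(\lambda)+l(\lambda))}{2\,d(\lambda)\,h(\lambda)\,l(\lambda)}$ (the contribution of a Hessian eigenvalue $\lambda$ to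 the steady-state variance of $x^t-x^\star$). *)

From HB Require Import structures.
From mathcomp Require Import all_boot all_order all_algebra.
From mathcomp Require Import complex.
Set Implicit Arguments. Unset Strict Implicit. Unset Printing Implicit Defensive.
Import Order.TTheory GRing.Theory Num.Theory.
Local Open Scope ring_scope.

Section Defs.
Variable R : rcfType.

Definition sym_mx n (Q : 'M[R]_n) : Prop := Q^T = Q.

Definition posdef_mx n (Q : 'M[R]_n) : Prop :=
  forall x : 'cV[R]_n, x != 0 -> 0 < (x^T *m Q *m x) ord0 ord0.

Definition in_QmL n (m L : R) (Q : 'M[R]_n) : Prop :=
  [/\ sym_mx Q, posdef_mx Q,
      eigenvalue Q L /\ (forall mu : R, eigenvalue Q mu -> mu <= L) &
      eigenvalue Q m /\ (forall mu : R, eigenvalue Q mu -> m <= mu)].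

Definition state_mx n (alpha beta gamma : R) (Q : 'M[R]_n) : 'M[R]_(n + n) :=
  block_mx 0 1%:M
           (- beta%:M + (gamma * alpha) *: Q)
           ((1 + beta)%:M - ((1 + gamma) * alpha) *: Q).

Definition cplx_eigenvalue k (A : 'M[R]_k) (z : R[i]) : Prop :=
  root (char_poly (map_mx (fun x : R => (x%:C)%C) A)) z.

Definition spectral_radius_eq k (A : 'M[R]_k) (r : R) : Prop :=
  (exists2 z, cplx_eigenvalue A z & Normc.normc z = r) /\
  (forall z, cplx_eigenvalue A z -> Normc.normc z <= r).

Definition a_fn (alpha beta gamma lam : R) : R := beta - gamma * alpha * lam.
Definition b_fn (alpha beta gamma lam : R) : R :=
  (1 + gamma) * alpha * lam - (1 + beta).
Definition d_fn alpha beta gamma lam : R :=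
  a_fn alpha beta gamma lam + b_fn alpha beta gamma lam + 1.
Definition l_fn alpha beta gamma lam : R :=
  a_fn alpha beta gamma lam - b_fn alpha beta gamma lam + 1.
Definition h_fn alpha beta gamma lam : R := 1 - a_fn alpha beta gamma lam.

Definition Jhat (sigma_w alpha beta gamma lam : R) : R :=
  sigma_w ^+ 2 * (d_fn alpha beta gamma lam + l_fn alpha beta gamma lam) /
  (2 * d_fn alpha beta gamma lam * h_fn alpha beta gamma lam
     * l_fn alpha beta gamma lam).

End Defs.

From HB Require Import structures.
From mathcomp Require Import all_boot all_order all_algebra.
From mathcomp Require Import complex.
From mathcomp Require Import ring lra.
Set Implicit Arguments. Unset Strict Implicit. Unset Printing Implicit Defensive.
Import Order.TTheory GRing.Theory Num.Theory.
Local Open Scope ring_scope.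

(* Test the hypothesis on a diagonal Hessian whose entries lie in [m, L] and include
   both m and L.  The eigenvalues of A are then the roots of z^2 + b(lambda) z + a(lambda)
   over the diagonal entries lambda: all of them lie in the closed disk of radius rho < 1
   and one lies on its boundary.  Roots inside the unit disk force the Jury conditions
   d, l, h > 0 at lambda = m and lambda = L, and since d, l, h are affine in lambda they
   hold on all of [m, L]; there 4 d l <= (d + l)^2 and (d + l) h = 2 (1 - a^2) <= 2 give
   Jhat >= sigma_w^2.  For the other bound take the lambda owning the root of modulus rho:
   with roots z1, z2 one has d l = (1 - z1^2)(1 - z2^2), h = 1 - z1 z2 and
   d + l = 2 (1 + z1 z2), and a direct estimate, for a real pair and for a conjugate pair,
   gives 2 d h l <= 2 (d + l) (1 + rho)^2 (1 - rho). *)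

Section Jury.
Variable R : realFieldType.
Implicit Types a b k r x y : R.

Definition jury_stable a b : Prop := [/\ 0 < a + b + 1, 0 < a - b + 1 & 0 < 1 - a].

Definition var_gain a b : R :=
  ((a + b + 1) + (a - b + 1)) / (2 * (a + b + 1) * (1 - a) * (a - b + 1)).

Lemma jury_stable_of_roots x (x' : R) y :
  x ^+ 2 + y ^+ 2 < 1 -> x' ^+ 2 + y ^+ 2 < 1 ->
  jury_stable (x * x' + y ^+ 2) (- (x + x')).
Proof.
move=> hx hx'.
have [? ?] : -1 < x < 1 /\ -1 < x' < 1 by split; apply/andP; split; nra.
split.
- have -> : x * x' + y ^+ 2 + - (x + x') + 1 = (1 - x) * (1 - x') + y ^+ 2 by ring.
  nra.
- have -> : x * x' + y ^+ 2 - - (x + x') + 1 = (1 + x) * (1 + x') + y ^+ 2 by ring.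
  nra.
- have := sqr_ge0 (x - x'); nra.
Qed.

Lemma var_gain_ge_inv a b k : jury_stable a b -> 0 < k ->
  2 * (a + b + 1) * (1 - a) * (a - b + 1) <= ((a + b + 1) + (a - b + 1)) * k ->
  k^-1 <= var_gain a b.
Proof.
case=> d_gt0 l_gt0 h_gt0 k_gt0 le_dhl.
by rewrite ler_pdivlMr ?pmulr_rgt0 // mulrC ler_pdivrMr.
Qed.

Lemma var_gain_ge1 a b : jury_stable a b -> 1 <= var_gain a b.
Proof.
move=> stable; rewrite -invr1; apply: var_gain_ge_inv => //.
case: stable => d_gt0 l_gt0 h_gt0; rewrite mulr1.
have := sqr_ge0 (a + b + 1 - (a - b + 1)); nra.
Qed.

Lemma var_gain_ge_of_roots x (x' : R) y r : 0 < r -> r < 1 ->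
  y * (x - x') = 0 -> x ^+ 2 + y ^+ 2 = r ^+ 2 -> x' ^+ 2 + y ^+ 2 <= r ^+ 2 ->
  (2 * (1 + r) ^+ 2 * (1 - r))^-1 <= var_gain (x * x' + y ^+ 2) (- (x + x')).
Proof.
move=> r_gt0 r_lt1 yxx' hx hx'.
have r2_lt1 : r ^+ 2 < 1 by nra.
apply: var_gain_ge_inv; first by apply: jury_stable_of_roots; lra.
  by rewrite !pmulr_rgt0 ?exprn_gt0; lra.
(* Either both roots are real or they form a conjugate pair. *)
have [y0|x'E] : y = 0 \/ x' = x.
  by move/eqP: yxx'; rewrite mulf_eq0 subr_eq0 => /orP[] /eqP; [left|right].
- rewrite y0 expr0n /= !addr0 in hx hx' *.
  rewrite [leLHS](_ : _ = 2 * (1 - x ^+ 2) * ((1 - x' ^+ 2) * (1 - x * x'))); last by ring.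
  rewrite [leRHS](_ : _ = 2 * (1 - r ^+ 2) * (2 * (1 + x * x') * (1 + r))); last by ring.
  rewrite hx; apply: ler_wpM2l; first lra.
  have xx'_le_r : - (x * x') <= r by nra.
  apply: (@le_trans _ _ ((1 - x' ^+ 2) * (1 + r))); first by apply: ler_wpM2l; lra.
  apply: ler_wpM2r; first lra.
  have := sqr_ge0 (x + x'); nra.
- have -> : y ^+ 2 = r ^+ 2 - x ^+ 2 by rewrite -hx; ring.
  rewrite x'E.
  rewrite [leLHS](_ : _ = 2 * (1 - r ^+ 2) * ((1 + r ^+ 2) ^+ 2 - 4 * x ^+ 2)); last by ring.
  rewrite [leRHS](_ : _ = 2 * (1 - r ^+ 2) * (2 * (1 + r ^+ 2) * (1 + r))); last by ring.
  apply: ler_wpM2l; first lra.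
  have := sqr_ge0 x; nra.
Qed.
End Jury.

Section QuadRoots.
Variable R : rcfType.
Implicit Types a b x y r : R.

(* [x + i y] is a root of [z^2 + b z + a], split into real and imaginary parts. *)
Definition quad_root a b x y : Prop :=
  x ^+ 2 - y ^+ 2 + b * x + a = 0 /\ y * (2 * x + b) = 0.

Lemma quad_root_exists a b : exists x y, quad_root a b x y.
Proof.
set D := b ^+ 2 - 4 * a.
have [D_ge0|D_lt0] := lerP 0 D.
  exists ((- b + Num.sqrt D) / 2), 0; split; last by rewrite mul0r.
  transitivity ((Num.sqrt D ^+ 2 - D) / 4); first by rewrite /D; field.
  by rewrite sqr_sqrtr // subrr mul0r.
exists (- b / 2), (Num.sqrt (- D) / 2); split; last by field.
transitivity ((- D - Num.sqrt (- D) ^+ 2) / 4); first by rewrite /D; field.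
by rewrite sqr_sqrtr ?subrr ?mul0r // oppr_ge0 ltW.
Qed.

Lemma quad_root_vieta a b x y : quad_root a b x y ->
  exists x', [/\ quad_root a b x' (- y), a = x * x' + y ^+ 2, b = - (x + x')
               & y * (x - x') = 0].
Proof.
case=> re im; exists (- b - x); split.
- by split; [rewrite -re | rewrite -im]; ring.
- by apply/eqP; rewrite -subr_eq0 -re; apply/eqP; ring.
- ring.
- by rewrite -im; ring.
Qed.

Lemma jury_stable_of_quad_roots a b :
  (forall x y, quad_root a b x y -> x ^+ 2 + y ^+ 2 < 1) -> jury_stable a b.
Proof.
move=> roots_lt1; have [x [y root_xy]] := quad_root_exists a b.
have [x' [root_x'y -> -> _]] := quad_root_vieta root_xy.
apply: jury_stable_of_roots; first exact: roots_lt1 root_xy.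
by rewrite -[y ^+ 2]sqrrN; exact: roots_lt1 root_x'y.
Qed.

Lemma var_gain_ge_of_quad_root a b x y r : 0 < r -> r < 1 ->
  (forall x y, quad_root a b x y -> x ^+ 2 + y ^+ 2 <= r ^+ 2) ->
  quad_root a b x y -> x ^+ 2 + y ^+ 2 = r ^+ 2 ->
  (2 * (1 + r) ^+ 2 * (1 - r))^-1 <= var_gain a b.
Proof.
move=> r_gt0 r_lt1 roots_le root_xy norm_xy.
have [x' [root_x'y -> -> yxx']] := quad_root_vieta root_xy.
apply: var_gain_ge_of_roots => //; rewrite -[y ^+ 2]sqrrN; exact: roots_le root_x'y.
Qed.

End QuadRoots.

Lemma gt0_affine_between (R : realFieldType) (p s m L lam : R) : m <= lam <= L ->
  0 < p + s * m -> 0 < p + s * L -> 0 < p + s * lam.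
Proof.
case/andP=> m_le L_ge; have [s_ge0|s_lt0] := lerP 0 s.
  have : s * m <= s * lam by apply: ler_wpM2l.
  lra.
have : s * L <= s * lam by apply: ler_wnM2l => //; lra.
lra.
Qed.

Lemma jury_stable_between (R : rcfType) (alpha beta gamma m L lam : R) :
  m <= lam <= L ->
  jury_stable (a_fn alpha beta gamma m) (b_fn alpha beta gamma m) ->
  jury_stable (a_fn alpha beta gamma L) (b_fn alpha beta gamma L) ->
  jury_stable (a_fn alpha beta gamma lam) (b_fn alpha beta gamma lam).
Proof.
move=> lam_in.
have d_affine t : a_fn alpha beta gamma t + b_fn alpha beta gamma t + 1 = 0 + alpha * t.
  by rewrite /a_fn /b_fn; ring.
have l_affine t : a_fn alpha beta gamma t - b_fn alpha beta gamma t + 1 =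
    (2 + 2 * beta) + (- (1 + 2 * gamma) * alpha) * t.
  by rewrite /a_fn /b_fn; ring.
have h_affine t : 1 - a_fn alpha beta gamma t = (1 - beta) + gamma * alpha * t.
  by rewrite /a_fn; ring.
rewrite /jury_stable !d_affine !l_affine !h_affine => -[dm lm hm] [dL lL hL].
by split; exact: gt0_affine_between lam_in _ _.
Qed.

Lemma Jhat_var_gain (R : rcfType) (sigma_w alpha beta gamma lam : R) :
  Jhat sigma_w alpha beta gamma lam =
  sigma_w ^+ 2 * var_gain (a_fn alpha beta gamma lam) (b_fn alpha beta gamma lam).
Proof. by rewrite /Jhat /var_gain mulrA. Qed.

Lemma eigenvalue_diag_mx (F : fieldType) n (q : 'rV[F]_n) mu :
  eigenvalue (diag_mx q) mu <-> exists k, mu = q 0 k.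
Proof.
split.
  case/eigenvalueP=> v vq /rV0Pn[k vk]; exists k; apply: (mulIf vk).
  by have := congr1 (fun M : 'rV_n => M 0 k) vq; rewrite mul_mx_diag !mxE mulrC.
move=> [k ->]; apply/eigenvalueP; exists (delta_mx 0 k).
  apply/rowP => j; rewrite mul_mx_diag !mxE eqxx /=.
  by have [->|] := eqVneq j k; rewrite ?mulr1 ?mul1r ?mulr0 ?mul0r.
by apply/rV0Pn; exists k; rewrite mxE !eqxx oner_eq0.
Qed.

Lemma posdef_diag_mx (R : rcfType) n (q : 'rV[R]_n) :
  (forall k, 0 < q 0 k) -> posdef_mx (diag_mx q).
Proof.
move=> q_gt0 x /cV0Pn[k xk].
rewrite mul_mx_diag mxE (bigD1 k) //= !mxE ltr_pwDl //.
  by rewrite mulrAC pmulr_lgt0 // -expr2 exprn_even_gt0.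
by apply: sumr_ge0 => i _; rewrite !mxE mulrAC pmulr_lge0 // -expr2 sqr_ge0.
Qed.

Lemma diag_mx_in_QmL (R : rcfType) n (q : 'rV[R]_n) (m L : R) : 0 < m ->
  (forall k, m <= q 0 k <= L) -> (exists k, q 0 k = m) -> (exists k, q 0 k = L) ->
  in_QmL m L (diag_mx q).
Proof.
move=> m_gt0 q_in [km qm] [kL qL]; split.
- exact: tr_diag_mx.
- by apply: posdef_diag_mx => k; have /andP[mq _] := q_in k; apply: lt_le_trans mq.
- split; first by apply/eigenvalue_diag_mx; exists kL.
  by move=> mu /eigenvalue_diag_mx[k ->]; case/andP: (q_in k).
- split; first by apply/eigenvalue_diag_mx; exists km.
  by move=> mu /eigenvalue_diag_mx[k ->]; case/andP: (q_in k).
Qed.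

Lemma eigenvalue_companion_diag (F : fieldType) n (c d : 'rV[F]_n) z :
  eigenvalue (block_mx 0 1%:M (diag_mx c) (diag_mx d)) z <->
  exists j, z ^+ 2 = c 0 j + d 0 j * z.
Proof.
split.
  case/eigenvalueP=> v; rewrite -[v]hsubmxK; move: (lsubmx v) (rsubmx v) => u1 u2.
  rewrite mul_row_block !mulmx0 !add0r mulmx1 scale_row_mx row_mx_eq0 !mul_mx_diag.
  case/eq_row_mx=> /rowP cE /rowP dE nz_u.
  have /rV0Pn[j u2j] : u2 != 0.
    apply: contraNneq nz_u => u2_0; rewrite u2_0 eqxx andbT.
    by apply/eqP/rowP => k; have := dE k; rewrite u2_0 !mxE mul0r addr0 mulr0.
  exists j; apply: (mulIf u2j); have := cE j; have := dE j; rewrite !mxE => dj cj.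
  by rewrite expr2 -mulrA -dj mulrDr -cj; ring.
move=> [j zE]; apply/eigenvalueP.
exists (row_mx ((z - d 0 j) *: delta_mx 0 j) (delta_mx 0 j)).
  rewrite mul_row_block !mulmx0 !add0r mulmx1 scale_row_mx !mul_mx_diag.
  congr row_mx; apply/rowP => k; rewrite !mxE eqxx /=;
    have [->|_] := eqVneq k j; rewrite ?mulr1 ?mul1r ?mulr0 ?mul0r ?addr0 //.
    by rewrite mulrBr -expr2 zE; ring.
  by rewrite subrK.
rewrite row_mx_eq0 negb_and; apply/orP; right.
by apply/rV0Pn; exists j; rewrite mxE !eqxx oner_eq0.
Qed.

Lemma state_mx_diag (R : rcfType) n (alpha beta gamma : R) (q : 'rV[R]_n) :
  state_mx alpha beta gamma (diag_mx q) =
  block_mx 0 1%:M (diag_mx (\row_j - a_fn alpha beta gamma (q 0 j)))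
                  (diag_mx (\row_j - b_fn alpha beta gamma (q 0 j))).
Proof.
congr block_mx; apply/matrixP => i j; rewrite !mxE /a_fn /b_fn;
  by have [->|_] := eqVneq i j; rewrite ?mulr1n ?mulr0n /=; ring.
Qed.

Lemma diag_spectrum_exists (R : rcfType) n (m L : R) :
  (1 < n)%N \/ (0 < n)%N /\ m = L -> m <= L ->
  exists q : 'rV[R]_n,
    [/\ forall k, m <= q 0 k <= L, exists k, q 0 k = m & exists k, q 0 k = L].
Proof.
move=> n_spec le_mL; have n_gt0 : (0 < n)%N by case: n_spec => [/ltnW|[]].
exists (\row_(k < n) if k == 0 :> nat then m else L); split.
- by move=> k; rewrite mxE; case: ifP; rewrite lexx le_mL.
- by exists (Ordinal n_gt0); rewrite mxE.
- case: n_spec => [n_gt1|[_ <-]]; first by exists (Ordinal n_gt1); rewrite mxE.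
  by exists (Ordinal n_gt0); rewrite mxE.
Qed.

Section StateSpectrum.
Variables (R : rcfType) (alpha beta gamma : R).

Lemma quad_root_complex (a b x y : R) :
  (x +i* y)%C ^+ 2 = (- a)%:C%C + (- b)%:C%C * (x +i* y)%C <-> quad_root a b x y.
Proof.
have reE : (x * x - y * y == - a + (- b * x - 0 * y)) =
           (x ^+ 2 - y ^+ 2 + b * x + a == 0).
  by rewrite -subr_eq0; congr (_ == 0); ring.
have imE : (x * y + y * x == 0 + (- b * y + 0 * x)) = (y * (2 * x + b) == 0).
  by rewrite -subr_eq0; congr (_ == 0); ring.
split=> [/eqP | [re im]].
  by rewrite eq_complex /= reE imE => /andP[/eqP re /eqP im].
by apply/eqP; rewrite eq_complex /= reE imE re im eqxx.
Qed.

Lemma cplx_eigenvalue_state_mx_diag n (q : 'rV[R]_n) x y :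
  cplx_eigenvalue (state_mx alpha beta gamma (diag_mx q)) (x +i* y)%C <->
  exists j, quad_root (a_fn alpha beta gamma (q 0 j)) (b_fn alpha beta gamma (q 0 j)) x y.
Proof.
rewrite /cplx_eigenvalue -eigenvalue_root_char state_mx_diag.
rewrite map_block_mx (map_mx1 (real_complex R)) !(map_diag_mx (real_complex R)).
rewrite (_ : map_mx _ 0 = 0); last by apply/matrixP => i j; rewrite !mxE.
rewrite eigenvalue_companion_diag.
by split=> -[j root_j]; exists j; move: root_j; rewrite !mxE quad_root_complex.
Qed.

Lemma sqr_normc_complex (x y : R) : Normc.normc (x +i* y)%C ^+ 2 = x ^+ 2 + y ^+ 2.
Proof. by rewrite sqr_sqrtr // addr_ge0 ?sqr_ge0. Qed.

Lemma normc_complex_le (x y r : R) : 0 <= r ->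
  (Normc.normc (x +i* y)%C <= r) = (x ^+ 2 + y ^+ 2 <= r ^+ 2).
Proof. by move=> r_ge0; rewrite -{1}(ger0_norm r_ge0) -sqrtr_sqr ler_sqrt ?sqr_ge0. Qed.

Lemma spectral_radius_state_mx_diag n (q : 'rV[R]_n) (rho : R) : 0 <= rho ->
  spectral_radius_eq (state_mx alpha beta gamma (diag_mx q)) rho ->
  (forall j x y, quad_root (a_fn alpha beta gamma (q 0 j)) (b_fn alpha beta gamma (q 0 j)) x y ->
     x ^+ 2 + y ^+ 2 <= rho ^+ 2) /\
  exists j x y, quad_root (a_fn alpha beta gamma (q 0 j)) (b_fn alpha beta gamma (q 0 j)) x y /\
     x ^+ 2 + y ^+ 2 = rho ^+ 2.
Proof.
move=> rho_ge0 [[[x y] eig_xy norm_xy] eig_le]; split.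
  move=> j x' y' root_j; rewrite -normc_complex_le //.
  by apply: eig_le; apply/cplx_eigenvalue_state_mx_diag; exists j.
have [j root_j] := (cplx_eigenvalue_state_mx_diag q x y).1 eig_xy.
by exists j, x, y; rewrite -sqr_normc_complex norm_xy.
Qed.
End StateSpectrum.

Theorem proposition6 (R : rcfType) (n : nat) (m L alpha beta gamma sigma_w rho : R) :
  ((1 < n)%N \/ ((0 < n)%N /\ m = L)) ->
  0 < m -> m <= L -> 0 <= sigma_w ->
  0 < rho -> rho < 1 ->
  (forall Q : 'M[R]_n, in_QmL m L Q ->
     spectral_radius_eq (state_mx alpha beta gamma Q) rho) ->
  let Ts := 1 / (1 - rho) in
  (exists2 lam, m <= lam <= L &
     sigma_w ^+ 2 / (2 * (1 + rho) ^+ 2) * Ts <= Jhat sigma_w alpha beta gamma lam) /\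
  (forall lam, m <= lam <= L -> sigma_w ^+ 2 <= Jhat sigma_w alpha beta gamma lam).
Proof.
move=> n_spec m_gt0 le_mL _ rho_gt0 rho_lt1 spec Ts.
have [q [q_in [km qm] [kL qL]]] := diag_spectrum_exists n_spec le_mL.
have Q_in : in_QmL m L (diag_mx q).
  by apply: diag_mx_in_QmL => //; [exists km | exists kL].
have [roots_le [j [x [y [root_xy norm_xy]]]]] :=
  spectral_radius_state_mx_diag (ltW rho_gt0) (spec _ Q_in).
have stable k : jury_stable (a_fn alpha beta gamma (q 0 k)) (b_fn alpha beta gamma (q 0 k)).
  by apply: jury_stable_of_quad_roots => x' y' /roots_le; nra.
split.
  exists (q 0 j) => //; rewrite Jhat_var_gain.
  rewrite (_ : _ * Ts = sigma_w ^+ 2 * (2 * (1 + rho) ^+ 2 * (1 - rho))^-1); last first.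
    by rewrite /Ts; field; lra.
  apply: ler_wpM2l; first exact: sqr_ge0.
  exact: var_gain_ge_of_quad_root (roots_le j) root_xy norm_xy.
move=> lam lam_in; rewrite Jhat_var_gain -{1}[sigma_w ^+ 2]mulr1.
apply: ler_wpM2l; first exact: sqr_ge0.
by apply/var_gain_ge1/(jury_stable_between lam_in); [rewrite -qm | rewrite -qL]; apply: stable.
Qed.
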